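(* Let $T:[a,b]\times[c,d]\to\mathbb{R}$ be the function constructed from a generating function $\phi$ as described in the context. If $\phi$ is of bounded variation in the sense of Arzelà on $[a_0,a_1]\times[c,d]$, then the box dimension of the graph $G(T)$ exists and equals $2$.
   Context: Let $a<b$, $c<d$. Set $a_0=a$ and $a_n=a+(b-a)(\tfrac12+\tfrac14+\dots+\tfrac1{2^n})$ for $n\in\mathbb{N}$, so $a_n\uparrow b$. Let $\phi:[a_0,a_1]\times[c,d]\to\mathbb{R}$ be continuous with $\phi(a_0,y)=\phi(a_1,y)$ for all $y\in[c,d]$ (the generating function). For $n\ge1$ let $\psi_n:[a_{n-1},a_n]\to[a_0,a_1]$ be the increasing affine bijection $\psi_n(x)=\frac{2^n[(a_1-a_0)x+a_0a_n-a_1a_{n-1}]}{b-a}$. Let $F_1=\phi$ on $[a_0,a_1]\times[c,d]$ and for $n\ge2$, $F_n(x,y)=\frac1n\phi(\psi_n(x),y)+\frac{n-1}{n}\phi(a_0,y)$ for $(x,y)\in[a_{n-1},a_n]\times[c,d]$. Define $T_n(x,y)=F_k(x,y)$ for $(x,y)\in[a_{k-1},a_k]\times[c,d]$, $k=1,\dots,n$, and $T_n(x,y)=F_n(a_n,y)$ for $(x,y)\in[a_n,b]\times[c,d]$; and $T(x,y)=\lim_{n\to\infty}T_n(x,y)$. Bounded variation in the sense of Arzelà on a rectangle $[\alpha_1,\alpha_2]\times[c,d]$: there is $K$ such that for all $m$ and all $\alpha_1=x_0\le\dots\le x_m=\alpha_2$, $c=y_0\le\dots\le y_m=d$, $\sum_{i=0}^{m-1}|\phi(x_{i+1},y_{i+1})-\phi(x_i,y_i)|\le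 K$. $G(T)=\{(x,y,T(x,y))\}\subset\mathbb{R}^3$. *)

From Stdlib Require Import Reals Lra Lia.
From Coquelicot Require Import Coquelicot.
Open Scope R_scope.

Fixpoint an (a b : R) (n : nat) : R :=
  match n with
  | O => a
  | S k => an a b k + (b - a) / 2 ^ (S k)
  end.

Definition psi (a b : R) (n : nat) (x : R) : R :=
  2 ^ n * ((an a b 1 - an a b 0) * x + an a b 0 * an a b n
           - an a b 1 * an a b (n - 1)) / (b - a).

Definition Fk (a b : R) (phi : R -> R -> R) (n : nat) (x y : R) : R :=
  match n with
  | O | S O => phi x y
  | _ => / INR n * phi (psi a b n x) y + (INR n - 1) / INR n * phi (an a b 0) y
  end.

(* piece k x y = F_j(x,y) for x in [a_{j-1}, a_j], j = 1 .. k+1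
   (the pieces agree at the common endpoints). *)
Fixpoint piece (a b : R) (phi : R -> R -> R) (k : nat) (x y : R) : R :=
  match k with
  | O => Fk a b phi 1 x y
  | S j => if Rle_dec x (an a b (S j)) then piece a b phi j x y
           else Fk a b phi (S (S j)) x y
  end.

(* T_n (n >= 1): F_k on [a_{k-1},a_k] (k = 1..n), and F_n(a_n, y) on [a_n, b].
   (T_0 is irrelevant for the limit; it is given the same formula as T_1.) *)
Definition Tn (a b : R) (phi : R -> R -> R) (n : nat) (x y : R) : R :=
  let m := Nat.max n 1 in
  if Rle_dec x (an a b m) then piece a b phi (m - 1) x y
  else Fk a b phi m (an a b m) y.

Definition Tlim (a b : R) (phi : R -> R -> R) (x y : R) : R :=
  real (Lim_seq (fun n => Tn a b phi n x y)).

Definition graphT (a b c d : R) (phi : R -> R -> R) : R * R * R -> Prop :=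
  fun p => let '(x, y, z) := p in
    a <= x <= b /\ c <= y <= d /\ z = Tlim a b phi x y.

Definition continuous_on_rect (phi : R -> R -> R) (x1 x2 y1 y2 : R) : Prop :=
  forall x y, x1 <= x <= x2 -> y1 <= y <= y2 ->
  forall eps, 0 < eps -> exists delta, 0 < delta /\
    forall x' y', x1 <= x' <= x2 -> y1 <= y' <= y2 ->
      Rabs (x' - x) < delta -> Rabs (y' - y) < delta ->
      Rabs (phi x' y' - phi x y) < eps.

Fixpoint arz_sum (phi : R -> R -> R) (xs ys : nat -> R) (m : nat) : R :=
  match m with
  | O => 0
  | S k => arz_sum phi xs ys k + Rabs (phi (xs (S k)) (ys (S k)) - phi (xs k) (ys k))
  end.

Definition arzela_BV (phi : R -> R -> R) (x1 x2 y1 y2 : R) : Prop :=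
  exists K, forall (m : nat) (xs ys : nat -> R),
    xs 0%nat = x1 -> xs m = x2 -> ys 0%nat = y1 -> ys m = y2 ->
    (forall i, (i < m)%nat -> xs i <= xs (S i)) ->
    (forall i, (i < m)%nat -> ys i <= ys (S i)) ->
    arz_sum phi xs ys m <= K.

Definition dist3 (p q : R * R * R) : R :=
  let '(x1, y1, z1) := p in let '(x2, y2, z2) := q in
  sqrt ((x1 - x2) ^ 2 + (y1 - y2) ^ 2 + (z1 - z2) ^ 2).

Definition covers (F : R * R * R -> Prop) (delta : R) (n : nat) : Prop :=
  exists U : nat -> (R * R * R -> Prop),
    (forall i, (i < n)%nat -> forall p q, U i p -> U i q -> dist3 p q <= delta) /\
    (forall p, F p -> exists i, (i < n)%nat /\ U i p).

Definition cover_number (F : R * R * R -> Prop) (delta : R) (n : nat) : Prop :=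
  covers F delta n /\ forall m, covers F delta m -> (n <= m)%nat.

Definition box_dim_eq (F : R * R * R -> Prop) (s : R) : Prop :=
  (forall delta, 0 < delta -> exists n, covers F delta n) /\
  forall eps, 0 < eps -> exists delta0, 0 < delta0 /\
    forall delta n, 0 < delta < delta0 -> cover_number F delta n ->
      Rabs (ln (INR n) / (- ln delta) - s) < eps.

(* Lower bound: G(T) projects onto [a,b] x [c,d]; lifts of the points of a grid of mesh
   2 delta are pairwise farther apart than delta, so N_delta(G(T)) >= (b-a)(d-c)/(4 delta^2)
   (cover_lower).
   Upper bound: on the strip [a_k, a_(k+1)] x [c,d] the function T equals F_(k+1) (T_val),
   whose Arzelà variation is at most that of phi (var_Fk).  The graph of a function of
   Arzelà variation at most K is covered by O((1 + K)/h^2) cubes of side h (BV_graph_cover):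
   the cells of an h-grid are grouped along diagonals, which are monotone chains, so the
   oscillations of f on the cells of one diagonal add up to at most K (chain_bound).
   Covering N ~ log2(1/h) strips this way, and the remaining thin box over [a_N, b] (where
   |T| is bounded) directly, gives N_delta(G(T)) = O(delta^-2 log(1/delta))
   (graphT_cover_delta).  These two bounds force log N_delta / (-log delta) -> 2
   (box_dim_two). *)

From Pilot Require Import Defs.
From Stdlib Require Import Reals Lra Lia List ZArith Classical.
From Coquelicot Require Import Coquelicot.
Open Scope R_scope.

(* a_n = b - (b-a)/2^n: the strips [a_n, a_(n+1)] halve in width and fill [a,b). *)
Lemma an_closed a b n : an a b n = b - (b - a) / 2 ^ n.
Proof.
  induction n as [|n IH]; simpl.
  - field.
  - rewrite IH. assert (2 ^ n <> 0) by (apply pow_nonzero; lra). field; auto.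
Qed.

Lemma an_step a b n : an a b (S n) - an a b n = (b - a) / 2 ^ S n.
Proof. simpl. lra. Qed.

Lemma an_mono a b n m : a < b -> (n <= m)%nat -> an a b n <= an a b m.
Proof.
  intros Hab Hnm. induction Hnm as [|m _ IH]; [lra|].
  pose proof (an_step a b m).
  assert (0 < (b - a) / 2 ^ S m) by (apply Rdiv_lt_0_compat; [lra | apply pow_lt; lra]).
  lra.
Qed.

Lemma psi_left a b k : a < b -> psi a b (S k) (an a b k) = an a b 0.
Proof.
  intros Hab. unfold psi. replace (S k - 1)%nat with k by lia. rewrite !an_closed.
  assert (2 ^ k <> 0) by (apply pow_nonzero; lra). simpl. field. split; auto; lra.
Qed.

Lemma psi_right a b k : a < b -> psi a b (S k) (an a b (S k)) = an a b 1.
Proof.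
  intros Hab. unfold psi. replace (S k - 1)%nat with k by lia. rewrite !an_closed.
  assert (2 ^ k <> 0) by (apply pow_nonzero; lra). simpl. field. split; auto; lra.
Qed.

Lemma psi_mono a b n x y : a < b -> x <= y -> psi a b n x <= psi a b n y.
Proof.
  intros Hab Hxy. unfold psi, Rdiv.
  assert (Hslope : 0 < an a b 1 - an a b 0) by (simpl; lra).
  apply Rmult_le_compat_r; [apply Rlt_le, Rinv_0_lt_compat; lra|].
  apply Rmult_le_compat_l; [apply pow_le; lra|].
  apply Rplus_le_compat_r, Rplus_le_compat_r, Rmult_le_compat_l; lra.
Qed.

Lemma psi_range a b k x : a < b -> an a b k <= x <= an a b (S k) ->
  an a b 0 <= psi a b (S k) x <= an a b 1.
Proof.
  intros Hab [H1 H2]. rewrite <- (psi_left a b k), <- (psi_right a b k) by exact Hab.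
  split; apply psi_mono; auto.
Qed.

(** * The limit function T coincides with F_(k+1) on the k-th strip *)

Lemma INR_Sn_pos n : 0 < INR (S n).
Proof. apply lt_0_INR; lia. Qed.

Section Construction.
Variables (a b c d : R) (phi : R -> R -> R).
Hypothesis Hab : a < b.
Hypothesis Hper : forall y, c <= y <= d -> phi (an a b 0) y = phi (an a b 1) y.

(* Both ends of the k-th piece take the value phi(a_0, y): the pieces glue. *)
Lemma Fk_left k y : Fk a b phi (S k) (an a b k) y = phi (an a b 0) y.
Proof.
  destruct k as [|k]; [reflexivity|].
  unfold Fk. rewrite psi_left by exact Hab.
  pose proof (INR_Sn_pos (S k)). field. lra.
Qed.

Lemma Fk_right k y : c <= y <= d -> Fk a b phi (S k) (an a b (S k)) y = phi (an a b 0) y.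
Proof.
  intros Hy. destruct k as [|k].
  - simpl Fk. rewrite Hper; auto.
  - unfold Fk. rewrite psi_right, <- Hper by auto.
    pose proof (INR_Sn_pos (S k)). field. lra.
Qed.

Lemma piece_val j k x y : c <= y <= d -> (k <= j)%nat ->
  an a b k <= x <= an a b (S k) -> piece a b phi j x y = Fk a b phi (S k) x y.
Proof.
  intros Hy. revert k. induction j as [|j IH]; intros k Hk Hx.
  - assert (k = 0%nat) by lia. subst. reflexivity.
  - cbn [piece]. destruct (Rle_dec x (an a b (S j))) as [Hle|Hgt].
    + destruct (Nat.eq_dec k (S j)) as [->|Hne]; [|apply IH; auto; lia].
      assert (Hx' : x = an a b (S j)) by lra. subst x.
      rewrite (IH j); [| lia | split; [apply an_mono; auto | lra]].
      rewrite Fk_right, Fk_left; auto.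
    + destruct (Nat.eq_dec k (S j)) as [->|Hne]; [reflexivity|].
      assert (an a b (S k) <= an a b (S j)) by (apply an_mono; auto; lia). lra.
Qed.

Lemma Tn_val m k x y : c <= y <= d -> (k < m)%nat ->
  an a b k <= x <= an a b (S k) -> Defs.Tn a b phi m x y = Fk a b phi (S k) x y.
Proof.
  intros Hy Hk Hx. unfold Defs.Tn. replace (Nat.max m 1) with m by lia.
  destruct (Rle_dec x (an a b m)) as [_|Hgt]; [apply piece_val; auto; lia|].
  assert (an a b (S k) <= an a b m) by (apply an_mono; auto). lra.
Qed.

(* T = F_(k+1) on [a_k, a_(k+1)] x [c,d], since T_m stabilises there for m > k. *)
Lemma T_val k x y : c <= y <= d -> an a b k <= x <= an a b (S k) ->
  Tlim a b phi x y = Fk a b phi (S k) x y.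
Proof.
  intros Hy Hx. unfold Tlim.
  rewrite (Lim_seq_ext_loc _ (fun _ => Fk a b phi (S k) x y)), Lim_seq_const; [reflexivity|].
  exists (S k). intros m Hm. apply Tn_val; auto.
Qed.

Variable B : R.
Hypothesis HB : forall x y, an a b 0 <= x <= an a b 1 -> c <= y <= d -> Rabs (phi x y) <= B.

Lemma Fk_bound k x y : c <= y <= d -> an a b k <= x <= an a b (S k) ->
  Rabs (Fk a b phi (S k) x y) <= B.
Proof.
  intros Hy Hx. destruct k as [|k]; [apply HB; auto|].
  unfold Fk. set (N := INR (S (S k))).
  assert (HN : 1 < N) by (unfold N; rewrite S_INR; pose proof (INR_Sn_pos k); lra).
  pose proof (HB _ y (psi_range a b (S k) x Hab Hx) Hy) as H1.
  assert (Ha0 : an a b 0 <= an a b 0 <= an a b 1) by (split; [lra | apply an_mono; auto]).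
  pose proof (HB _ y Ha0 Hy) as H2.
  eapply Rle_trans; [apply Rabs_triang|].
  rewrite !Rabs_mult, Rabs_inv, (Rabs_right N), Rabs_div, (Rabs_right N), (Rabs_right (N - 1))
    by lra.
  apply Rle_trans with (/ N * B + (N - 1) / N * B); [|right; field; lra].
  apply Rplus_le_compat.
  - apply Rmult_le_compat_l; auto. apply Rlt_le, Rinv_0_lt_compat; lra.
  - apply Rmult_le_compat_l; auto. apply Rdiv_le_0_compat; lra.
Qed.

Lemma piece_bound j x y : c <= y <= d -> an a b 0 <= x <= an a b (S j) ->
  Rabs (piece a b phi j x y) <= B.
Proof.
  intros Hy. induction j as [|j IH]; intros Hx; [apply HB; auto|].
  cbn [piece]. destruct (Rle_dec x (an a b (S j))); [apply IH; lra|].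
  apply Fk_bound; auto. lra.
Qed.

Lemma Tn_bound m x y : c <= y <= d -> a <= x -> Rabs (Defs.Tn a b phi m x y) <= B.
Proof.
  intros Hy Hx. unfold Defs.Tn. cbv zeta.
  destruct (Nat.max m 1) as [|k] eqn:E; [lia|]. replace (S k - 1)%nat with k by lia.
  destruct (Rle_dec x (an a b (S k))) as [Hle|Hgt].
  - apply piece_bound; [exact Hy | change (an a b 0) with a; lra].
  - rewrite Fk_right by exact Hy. apply HB; [split; [lra | apply an_mono; auto] | exact Hy].
Qed.

Lemma T_bound x y : c <= y <= d -> a <= x -> Rabs (Tlim a b phi x y) <= B.
Proof.
  intros Hy Hx. unfold Tlim.
  assert (HTn : forall m, - B <= Defs.Tn a b phi m x y <= B)
    by (intros m; apply Rabs_le_between, Tn_bound; auto).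
  assert (Hup : Rbar_le (Lim_seq (fun m => Defs.Tn a b phi m x y)) (Lim_seq (fun _ => B)))
    by (apply Lim_seq_le_loc; exists 0%nat; intros m _; apply HTn).
  assert (Hlo : Rbar_le (Lim_seq (fun _ => - B)) (Lim_seq (fun m => Defs.Tn a b phi m x y)))
    by (apply Lim_seq_le_loc; exists 0%nat; intros m _; apply HTn).
  assert (HB0 : 0 <= B) by (specialize (HTn 0%nat); lra).
  rewrite Lim_seq_const in Hup, Hlo.
  destruct (Lim_seq (fun m => Defs.Tn a b phi m x y)) as [l| |]; simpl in *;
    try contradiction; [apply Rabs_le; lra | rewrite Rabs_R0; auto..].
Qed.

End Construction.

(** * Arzelà variation along monotone chains *)

Definition arzela_var_le (f : R -> R -> R) (x1 x2 y1 y2 K : R) : Prop :=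
  forall (m : nat) (xs ys : nat -> R),
    xs 0%nat = x1 -> xs m = x2 -> ys 0%nat = y1 -> ys m = y2 ->
    (forall i, (i < m)%nat -> xs i <= xs (S i)) ->
    (forall i, (i < m)%nat -> ys i <= ys (S i)) ->
    arz_sum f xs ys m <= K.

Fixpoint rsum (u : nat -> R) (r : nat) : R :=
  match r with O => 0 | S k => rsum u k + u k end.

Lemma rsum_const s r : rsum (fun _ => s) r = INR r * s.
Proof. induction r as [|r IH]; simpl rsum; [simpl; lra|]. rewrite IH, S_INR. lra. Qed.

Lemma rsum_affine (al be : R) u r :
  rsum (fun k => al * u k + be) r = al * rsum u r + INR r * be.
Proof. induction r as [|r IH]; simpl rsum; [simpl; lra|]. rewrite IH, S_INR. lra. Qed.

Lemma arz_sum_rsum f xs ys m :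
  arz_sum f xs ys m = rsum (fun k => Rabs (f (xs (S k)) (ys (S k)) - f (xs k) (ys k))) m.
Proof. induction m as [|m IH]; simpl; [reflexivity|]. rewrite IH. reflexivity. Qed.

(* The chain x1, Px 0, Qx 0, Px 1, Qx 1, ..., Px (r-1), Qx (r-1), x2 (indices 0 .. 2r+1). *)
Definition interleave (P Q : nat -> R) (e0 e1 : R) (r n : nat) : R :=
  match n with
  | O => e0
  | S n' => if Nat.ltb n' (2 * r) then
              (if Nat.even n' then P (Nat.div2 n') else Q (Nat.div2 n'))
            else e1
  end.

Lemma interleave_odd P Q e0 e1 r k :
  interleave P Q e0 e1 r (S (2 * k)) = if Nat.ltb k r then P k else e1.
Proof.
  unfold interleave. rewrite Nat.div2_double, Nat.even_mul.
  destruct (Nat.ltb_spec (2 * k) (2 * r)), (Nat.ltb_spec k r); auto; lia.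
Qed.

Lemma interleave_even P Q e0 e1 r k : (k < r)%nat ->
  interleave P Q e0 e1 r (S (S (2 * k))) = Q k.
Proof.
  intros Hk. unfold interleave. rewrite Nat.div2_succ_double.
  replace (Nat.even (S (2 * k))) with false
    by (rewrite Nat.even_succ, Nat.odd_mul; reflexivity).
  destruct (Nat.ltb_spec (S (2 * k)) (2 * r)); [reflexivity|lia].
Qed.

Lemma interleave_mono P Q e0 e1 r : e0 <= e1 -> ((0 < r)%nat -> e0 <= P 0%nat) ->
  (forall k, (k < r)%nat -> P k <= Q k <= e1) ->
  (forall k, (S k < r)%nat -> Q k <= P (S k)) ->
  forall i, (i < 2 * r + 1)%nat -> interleave P Q e0 e1 r i <= interleave P Q e0 e1 r (S i).
Proof.
  intros H0 H1 H2 H3 i Hi. destruct i as [|n'].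
  - change (interleave P Q e0 e1 r 1) with (interleave P Q e0 e1 r (S (2 * 0))).
    rewrite interleave_odd. destruct (Nat.ltb_spec 0 r); [apply H1; lia | simpl; lra].
  - destruct (Nat.Even_or_Odd n') as [[k ->]|[k ->]].
    + rewrite interleave_odd, interleave_even by lia.
      destruct (Nat.ltb_spec k r); [apply H2|]; lia.
    + replace (S (2 * k + 1)) with (S (S (2 * k))) by lia.
      replace (S (S (S (2 * k)))) with (S (2 * S k)) by lia.
      rewrite interleave_even, interleave_odd by lia.
      destruct (Nat.ltb_spec (S k) r); [apply H3 | apply H2]; lia.
Qed.

Section Variation.
Variables (f : R -> R -> R) (x1 x2 y1 y2 K : R).
Hypothesis HBV : arzela_var_le f x1 x2 y1 y2 K.
Hypothesis Hx12 : x1 <= x2.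
Hypothesis Hy12 : y1 <= y2.

Lemma chain_bound r (Px Py Qx Qy : nat -> R) :
  ((0 < r)%nat -> x1 <= Px 0%nat /\ y1 <= Py 0%nat) ->
  (forall k, (k < r)%nat -> Px k <= Qx k <= x2 /\ Py k <= Qy k <= y2) ->
  (forall k, (S k < r)%nat -> Qx k <= Px (S k) /\ Qy k <= Py (S k)) ->
  rsum (fun k => Rabs (f (Qx k) (Qy k) - f (Px k) (Py k))) r <= K.
Proof.
  intros H1 H2 H3.
  set (xs := interleave Px Qx x1 x2 r). set (ys := interleave Py Qy y1 y2 r).
  assert (Hpart : forall k, (k <= r)%nat ->
    rsum (fun k => Rabs (f (Qx k) (Qy k) - f (Px k) (Py k))) k <= arz_sum f xs ys (2 * k)).
  { induction k as [|k IH]; intros Hk; [simpl; lra|].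
    cbn [rsum]. replace (2 * S k)%nat with (S (S (2 * k))) by lia. cbn [arz_sum].
    unfold xs, ys. rewrite !interleave_even, !interleave_odd by lia.
    destruct (Nat.ltb_spec k r); [|lia]. fold xs ys.
    pose proof (IH ltac:(lia)).
    pose proof (Rabs_pos (f (Px k) (Py k) - f (xs (2 * k)%nat) (ys (2 * k)%nat))).
    lra. }
  assert (Hend : forall (P Q : nat -> R) e0 e1, interleave P Q e0 e1 r (2 * r + 1) = e1).
  { intros. replace (2 * r + 1)%nat with (S (2 * r)) by lia.
    rewrite interleave_odd. destruct (Nat.ltb_spec r r); [lia | reflexivity]. }
  assert (Hchain : arz_sum f xs ys (2 * r + 1) <= K).
  { apply HBV; try reflexivity; try apply Hend; apply interleave_mono; auto;
      intros; apply H1 || apply H2 || apply H3; auto. }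
  replace (2 * r + 1)%nat with (S (2 * r)) in Hchain by lia. cbn [arz_sum] in Hchain.
  pose proof (Hpart r (Nat.le_refl r)).
  pose proof (Rabs_pos (f (xs (S (2 * r))) (ys (S (2 * r))) - f (xs (2 * r)%nat) (ys (2 * r)%nat))).
  lra.
Qed.

Lemma var_nonneg : 0 <= K.
Proof.
  pose proof (chain_bound 0 (fun _ => 0) (fun _ => 0) (fun _ => 0) (fun _ => 0)) as H.
  simpl in H. apply H; intros; lia.
Qed.

Lemma var_increment x y x' y' : x1 <= x <= x' -> x' <= x2 -> y1 <= y <= y' -> y' <= y2 ->
  Rabs (f x' y' - f x y) <= K.
Proof.
  intros Hx Hx' Hy Hy'.
  pose proof (chain_bound 1 (fun _ => x) (fun _ => y) (fun _ => x') (fun _ => y')) as H.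
  simpl in H. rewrite Rplus_0_l in H. apply H; intros; split; lra || lia.
Qed.

Lemma var_bound x y : x1 <= x <= x2 -> y1 <= y <= y2 -> Rabs (f x y) <= Rabs (f x1 y1) + K.
Proof.
  intros Hx Hy. pose proof (var_increment x1 y1 x y ltac:(lra) ltac:(lra) ltac:(lra) ltac:(lra)).
  pose proof (Rabs_triang (f x y - f x1 y1) (f x1 y1)).
  replace (f x y - f x1 y1 + f x1 y1) with (f x y) in * by ring. lra.
Qed.

Lemma var_left_edge m (xs ys : nat -> R) : ys 0%nat = y1 -> ys m = y2 ->
  (forall i, (i < m)%nat -> ys i <= ys (S i)) ->
  arz_sum (fun _ y => f x1 y) xs ys m <= K.
Proof.
  intros Hy0 Hym Hmono.
  assert (Hbelow : forall i, (i <= m)%nat -> ys i <= y2).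
  { assert (Hup : forall n i, (i + n <= m)%nat -> ys i <= ys (i + n)%nat).
    { induction n as [|n IH]; intros i Hi; rewrite ?Nat.add_0_r; [lra|].
      replace (i + S n)%nat with (S (i + n)) by lia.
      eapply Rle_trans; [apply IH | apply Hmono]; lia. }
    intros i Hi. rewrite <- Hym. replace m with (i + (m - i))%nat by lia. apply Hup. lia. }
  rewrite arz_sum_rsum.
  apply (chain_bound m (fun _ => x1) ys (fun _ => x1) (fun k => ys (S k))).
  - intros _. rewrite Hy0. lra.
  - intros k Hk. repeat split; try lra; [apply Hmono | apply Hbelow]; lia.
  - intros k Hk. split; lra.
Qed.

End Variation.

Lemma arz_sum_affine (g1 g2 : R -> R -> R) al be xs ys m : 0 <= al -> 0 <= be ->
  arz_sum (fun x y => al * g1 x y + be * g2 x y) xs ys m <=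
  al * arz_sum g1 xs ys m + be * arz_sum g2 xs ys m.
Proof.
  intros H1 H2. induction m as [|m IH]; simpl; [lra|].
  set (d1 := g1 (xs (S m)) (ys (S m)) - g1 (xs m) (ys m)).
  set (d2 := g2 (xs (S m)) (ys (S m)) - g2 (xs m) (ys m)).
  replace (_ - _) with (al * d1 + be * d2) by (unfold d1, d2; ring).
  pose proof (Rabs_triang (al * d1) (be * d2)).
  rewrite !Rabs_mult, (Rabs_right al), (Rabs_right be) in H by lra. lra.
Qed.

Lemma arz_sum_comp (g : R -> R -> R) (p : R -> R) xs ys m :
  arz_sum (fun x y => g (p x) y) xs ys m = arz_sum g (fun i => p (xs i)) ys m.
Proof. induction m as [|m IH]; simpl; [reflexivity|]. rewrite IH. reflexivity. Qed.

(* Each piece F_(k+1), a convex combination of phi o psi_(k+1) and phi(a_0, .),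
   has on its strip the same variation bound as phi. *)
Lemma var_Fk a b c d K phi k : a < b -> c <= d ->
  arzela_var_le phi (an a b 0) (an a b 1) c d K ->
  arzela_var_le (Fk a b phi (S k)) (an a b k) (an a b (S k)) c d K.
Proof.
  intros Hab Hcd HBV. destruct k as [|k]; [exact HBV|].
  intros m xs ys Hx0 Hxm Hy0 Hym Hxmono Hymono.
  set (N := INR (S (S k))).
  assert (HN : 1 < N) by (unfold N; rewrite S_INR; pose proof (INR_Sn_pos k); lra).
  change (arz_sum (fun x y => / N * (fun x y => phi (psi a b (S (S k)) x) y) x y +
            (N - 1) / N * (fun _ y => phi (an a b 0) y) x y) xs ys m <= K).
  eapply Rle_trans; [apply arz_sum_affine;
    [apply Rlt_le, Rinv_0_lt_compat | apply Rdiv_le_0_compat]; lra|].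
  assert (H1 : arz_sum (fun x y => phi (psi a b (S (S k)) x) y) xs ys m <= K).
  { rewrite arz_sum_comp. apply HBV; auto.
    - rewrite Hx0. apply psi_left; exact Hab.
    - rewrite Hxm. apply psi_right; exact Hab.
    - intros i Hi. apply psi_mono; auto. }
  assert (H2 : arz_sum (fun _ y => phi (an a b 0) y) xs ys m <= K)
    by (apply (var_left_edge phi (an a b 0) (an a b 1) c d K HBV);
        [apply an_mono; auto | auto..]).
  apply Rle_trans with (/ N * K + (N - 1) / N * K); [|right; field; lra].
  apply Rplus_le_compat; apply Rmult_le_compat_l; auto;
    [apply Rlt_le, Rinv_0_lt_compat | apply Rdiv_le_0_compat]; lra.
Qed.

Lemma covers_subset (F G : R * R * R -> Prop) del n :
  covers F del n -> (forall p, G p -> F p) -> covers G del n.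
Proof. intros [U [HU1 HU2]] HGF. exists U. split; auto. Qed.

Lemma covers_diam (F : R * R * R -> Prop) del del' n :
  covers F del n -> del <= del' -> covers F del' n.
Proof.
  intros [U [HU1 HU2]] Hd. exists U. split; auto.
  intros i Hi p q Hp Hq. eapply Rle_trans; [apply (HU1 i Hi p q Hp Hq) | exact Hd].
Qed.

Lemma covers_empty (F : R * R * R -> Prop) del : (forall p, ~ F p) -> covers F del 0.
Proof.
  intros H. exists (fun _ _ => False). split; [intros; contradiction|].
  intros p Hp. exfalso. exact (H p Hp).
Qed.

Lemma covers_union (F G : R * R * R -> Prop) del n1 n2 :
  covers F del n1 -> covers G del n2 -> covers (fun p => F p \/ G p) del (n1 + n2).
Proof.
  intros [U1 [H1 H1']] [U2 [H2 H2']].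
  exists (fun i => if Nat.ltb i n1 then U1 i else U2 (i - n1)%nat). split.
  - intros i Hi p q. destruct (Nat.ltb_spec i n1); [apply H1 | apply H2]; lia.
  - intros p [Hp|Hp].
    + destruct (H1' p Hp) as [i [Hi Hu]]. exists i. split; [lia|].
      destruct (Nat.ltb_spec i n1); [exact Hu | lia].
    + destruct (H2' p Hp) as [i [Hi Hu]]. exists (i + n1)%nat. split; [lia|].
      destruct (Nat.ltb_spec (i + n1) n1); [lia|].
      replace (i + n1 - n1)%nat with i by lia. exact Hu.
Qed.

Lemma covers_family (F : nat -> R * R * R -> Prop) (s : nat -> R) del r :
  (forall k, (k < r)%nat -> exists n, covers (F k) del n /\ INR n <= s k) ->
  exists n, covers (fun p => exists k, (k < r)%nat /\ F k p) del n /\ INR n <= rsum s r.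
Proof.
  induction r as [|r IH]; intros H.
  - exists 0%nat. split; [apply covers_empty; intros p [k [Hk _]]; lia | simpl; lra].
  - destruct IH as [n1 [C1 B1]]; [intros; apply H; lia|].
    destruct (H r ltac:(lia)) as [n2 [C2 B2]]. exists (n1 + n2)%nat. split.
    + eapply covers_subset; [apply (covers_union _ _ _ _ _ C1 C2)|].
      intros p [k [Hk Hp]]. destruct (Nat.eq_dec k r) as [->|Hne]; [right; exact Hp|].
      left. exists k. split; [lia | exact Hp].
    + rewrite plus_INR. simpl rsum. lra.
Qed.

Lemma ceil_exists u : 0 <= u -> exists n : nat, u <= INR n <= u + 1.
Proof.
  intros Hu. destruct (archimed u) as [H1 H2].
  assert (Hz : (0 <= up u)%Z) by (apply le_IZR; lra).
  exists (Z.to_nat (up u)). rewrite INR_IZR_INZ, Z2Nat.id by exact Hz. lra.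
Qed.

Lemma grid_find n h t : 0 < h -> (1 <= n)%nat -> 0 <= t <= INR n * h ->
  exists k, (k < n)%nat /\ INR k * h <= t <= INR (S k) * h.
Proof.
  intros Hh. induction n as [|n IH]; intros Hn Ht; [lia|].
  destruct (Rle_dec t (INR n * h)) as [Hle|Hgt].
  - destruct n as [|n]; [exists 0%nat; split; [lia | simpl in *; lra]|].
    destruct (IH ltac:(lia) ltac:(lra)) as [k [Hk Hk']]. exists k. split; [lia | exact Hk'].
  - exists n. split; [lia | lra].
Qed.

Lemma finite_choice {A : Type} (x0 : A) (P : nat -> A -> Prop) n :
  (forall i, (i < n)%nat -> exists x, P i x) ->
  exists g : nat -> A, forall i, (i < n)%nat -> P i (g i).
Proof.
  induction n as [|n IH]; intros H; [exists (fun _ => x0); intros; lia|].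
  destruct IH as [g Hg]; [intros; apply H; lia|].
  destruct (H n ltac:(lia)) as [x Hx].
  exists (fun i => if Nat.eqb i n then x else g i). intros i Hi.
  destruct (Nat.eqb_spec i n) as [->|Hne]; [exact Hx | apply Hg; lia].
Qed.

Lemma pigeonhole P n (g : nat -> nat) : (forall q, (q < P)%nat -> (g q < n)%nat) ->
  (forall q q', (q < P)%nat -> (q' < P)%nat -> g q = g q' -> q = q') -> (P <= n)%nat.
Proof.
  intros Hrange Hinj.
  rewrite <- (length_seq P 0), <- (length_seq n 0), <- (length_map g (List.seq 0 P)).
  apply NoDup_incl_length.
  - apply NoDup_map_NoDup_ForallPairs; [|apply seq_NoDup].
    intros q q' Hq Hq'. rewrite in_seq in Hq, Hq'. apply Hinj; lia.
  - intros k Hk. apply in_map_iff in Hk. destruct Hk as [q [<- Hq]].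
    rewrite in_seq in *. specialize (Hrange q). lia.
Qed.

Lemma dist3_cube x1 y1 z1 x2 y2 z2 h :
  Rabs (x1 - x2) <= h -> Rabs (y1 - y2) <= h -> Rabs (z1 - z2) <= h ->
  dist3 (x1, y1, z1) (x2, y2, z2) <= sqrt 3 * h.
Proof.
  intros H1 H2 H3. unfold dist3.
  assert (Hh : 0 <= h) by (pose proof (Rabs_pos (x1 - x2)); lra).
  apply Rabs_le_between in H1, H2, H3.
  rewrite <- (sqrt_pow2 h Hh), <- sqrt_mult by (lra || nra).
  apply sqrt_le_1_alt. nra.
Qed.

Lemma dist3_ge_x x1 y1 z1 x2 y2 z2 : Rabs (x1 - x2) <= dist3 (x1, y1, z1) (x2, y2, z2).
Proof.
  unfold dist3. rewrite <- sqrt_Rsqr_abs. apply sqrt_le_1_alt. unfold Rsqr.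
  pose proof (pow2_ge_0 (y1 - y2)). pose proof (pow2_ge_0 (z1 - z2)). nra.
Qed.

Lemma dist3_ge_y x1 y1 z1 x2 y2 z2 : Rabs (y1 - y2) <= dist3 (x1, y1, z1) (x2, y2, z2).
Proof.
  unfold dist3. rewrite <- sqrt_Rsqr_abs. apply sqrt_le_1_alt. unfold Rsqr.
  pose proof (pow2_ge_0 (x1 - x2)). pose proof (pow2_ge_0 (z1 - z2)). nra.
Qed.

Definition box3 (x0 x0' y0 y0' zc H : R) (p : R * R * R) : Prop :=
  let '(x, y, z) := p in x0 <= x <= x0' /\ y0 <= y <= y0' /\ Rabs (z - zc) <= H.

Definition graph_rect (f : R -> R -> R) (x1 x2 y1 y2 : R) (p : R * R * R) : Prop :=
  let '(x, y, z) := p in x1 <= x <= x2 /\ y1 <= y <= y2 /\ z = f x y.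

Lemma column_cover x0 x0' y0 y0' zc H h : 0 < h -> x0 <= x0' <= x0 + h ->
  y0 <= y0' <= y0 + h -> 0 <= H ->
  exists n, covers (box3 x0 x0' y0 y0' zc H) (sqrt 3 * h) n /\ INR n <= 2 * H / h + 3.
Proof.
  intros Hh Hx Hy HH.
  destruct (ceil_exists (H / h)) as [N [HN1 HN2]]; [apply Rdiv_le_0_compat; lra|].
  assert (HNh : H <= INR N * h).
  { apply Rmult_le_compat_r with (r := h) in HN1; [|lra].
    unfold Rdiv in HN1. rewrite Rmult_assoc, Rinv_l, Rmult_1_r in HN1; lra. }
  set (zb := zc - INR N * h).
  exists (2 * N + 1)%nat. split.
  - exists (fun k p => let '(x, y, z) := p in x0 <= x <= x0' /\ y0 <= y <= y0' /\
                 zb + INR k * h <= z <= zb + INR (S k) * h). split.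
    + intros i Hi [[xa ya] za] [[xb yb] zb'] [Hxa [Hya Hza]] [Hxb [Hyb Hzb]].
      rewrite S_INR in *. apply dist3_cube; apply Rabs_le; lra.
    + intros [[x y] z] [Hx' [Hy' Hz]]. apply Rabs_le_between in Hz.
      destruct (grid_find (2 * N + 1) h (z - zb) Hh ltac:(lia)) as [k [Hk Hk']].
      { rewrite plus_INR, mult_INR. simpl INR. unfold zb. lra. }
      exists k. split; [exact Hk | repeat split; lra].
  - rewrite plus_INR, mult_INR. simpl INR.
    replace (2 * H / h + 3) with (2 * (H / h + 1) + 1) by (field; lra). lra.
Qed.

Lemma mesh_exists u1 u2 h : u1 < u2 -> 0 < h ->
  exists N, (1 <= N)%nat /\ (u2 - u1) / INR N <= h /\ INR N <= (u2 - u1) / h + 1.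
Proof.
  intros Hu Hh.
  assert (Hpos : 0 < (u2 - u1) / h) by (apply Rdiv_lt_0_compat; lra).
  destruct (ceil_exists ((u2 - u1) / h)) as [N [HN1 HN2]]; [lra|].
  assert (HN : (1 <= N)%nat) by (destruct N; [simpl in HN1; lra | lia]).
  assert (HNpos : 0 < INR N) by (apply lt_0_INR; lia).
  exists N. split; [exact HN|]. split; [|exact HN2].
  apply Rmult_le_reg_r with (INR N); [lra|].
  unfold Rdiv. rewrite Rmult_assoc, Rinv_l, Rmult_1_r by lra.
  apply Rmult_le_compat_r with (r := h) in HN1; [|lra].
  unfold Rdiv in HN1. rewrite Rmult_assoc, Rinv_l, Rmult_1_r in HN1; lra.
Qed.

Definition gridpt (u1 u2 : R) (N i : nat) : R := u1 + INR i * ((u2 - u1) / INR N).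

Section GridPoints.
Variables (u1 u2 : R) (N : nat).
Hypothesis Hu : u1 <= u2.
Hypothesis HN : (1 <= N)%nat.

Lemma mesh_nonneg : 0 <= (u2 - u1) / INR N.
Proof. apply Rdiv_le_0_compat; [lra | apply lt_0_INR; lia]. Qed.

Lemma gridpt_first : gridpt u1 u2 N 0 = u1.
Proof. unfold gridpt. simpl. lra. Qed.

Lemma gridpt_last : gridpt u1 u2 N N = u2.
Proof. unfold gridpt. field. apply not_0_INR. lia. Qed.

Lemma gridpt_step i : gridpt u1 u2 N (S i) = gridpt u1 u2 N i + (u2 - u1) / INR N.
Proof. unfold gridpt. rewrite S_INR. lra. Qed.

Lemma gridpt_mono i i' : (i <= i')%nat -> gridpt u1 u2 N i <= gridpt u1 u2 N i'.
Proof.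
  intros Hi. unfold gridpt. apply le_INR in Hi. pose proof mesh_nonneg.
  apply Rplus_le_compat_l, Rmult_le_compat_r; lra.
Qed.

Lemma gridpt_range i i' : (i <= i' <= N)%nat ->
  u1 <= gridpt u1 u2 N i <= gridpt u1 u2 N i' /\ gridpt u1 u2 N i' <= u2.
Proof.
  intros Hi. pose proof (gridpt_mono 0 i ltac:(lia)). pose proof (gridpt_mono i' N ltac:(lia)).
  rewrite gridpt_first in *. rewrite gridpt_last in *.
  repeat split; [lra | apply gridpt_mono; lia | lra].
Qed.

Lemma gridpt_find t : u1 <= t <= u2 ->
  exists i, (i < N)%nat /\ gridpt u1 u2 N i <= t <= gridpt u1 u2 N (S i).
Proof.
  intros Ht. destruct (Req_dec u1 u2) as [Heq|Hne].
  - exists 0%nat. split; [lia|]. rewrite gridpt_step, gridpt_first. rewrite Heq in *. lra.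
  - assert (Hm : 0 < (u2 - u1) / INR N) by (apply Rdiv_lt_0_compat; [lra | apply lt_0_INR; lia]).
    destruct (grid_find N _ (t - u1) Hm HN) as [i [Hi Hi']].
    { split; [lra|]. replace (INR N * ((u2 - u1) / INR N)) with (u2 - u1); [lra|].
      field. apply not_0_INR. lia. }
    exists i. split; [exact Hi|]. unfold gridpt. lra.
Qed.

End GridPoints.

Lemma box_cover x0 x0' y0 y0' zc H h : 0 < h -> x0 <= x0' <= x0 + h -> y0 < y0' -> 0 <= H ->
  exists n, covers (box3 x0 x0' y0 y0' zc H) (sqrt 3 * h) n /\
    INR n <= ((y0' - y0) / h + 1) * (2 * H / h + 3).
Proof.
  intros Hh Hx Hy HH.
  destruct (mesh_exists y0 y0' h Hy Hh) as [L [HL [Hv HLb]]].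
  set (Y := gridpt y0 y0' L).
  destruct (covers_family (fun j => box3 x0 x0' (Y j) (Y (S j)) zc H)
              (fun _ => 2 * H / h + 3) (sqrt 3 * h) L) as [n [Hc Hn]].
  { intros j _. apply column_cover; auto. unfold Y. rewrite gridpt_step.
    pose proof (mesh_nonneg y0 y0' L ltac:(lra) HL). lra. }
  exists n. split.
  - eapply covers_subset; [exact Hc|]. intros [[x y] z] [Hx' [Hy' Hz]].
    destruct (gridpt_find y0 y0' L ltac:(lra) HL y Hy') as [j [Hj Hj']].
    exists j. split; [exact Hj | repeat split; unfold Y; lra].
  - rewrite rsum_const in Hn. eapply Rle_trans; [exact Hn|].
    apply Rmult_le_compat_r; [|exact HLb].
    assert (0 <= H / h) by (apply Rdiv_le_0_compat; lra).
    replace (2 * H / h) with (2 * (H / h)) by (field; lra). lra.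
Qed.

(** * Graphs of functions of bounded Arzelà variation have N_delta = O(delta^-2) *)

Lemma near_sup (S : R -> R -> Prop) (g : R -> R -> R) (K e x0 y0 : R) : 0 < e ->
  S x0 y0 -> (forall x y, S x y -> g x y <= K) ->
  exists x y, S x y /\ forall x' y', S x' y' -> g x' y' <= g x y + e.
Proof.
  intros He HS0 HK.
  set (E := fun r => exists x y, S x y /\ r = g x y).
  destruct (completeness E) as [m [Hub Hleast]].
  - exists K. intros r (x & y & Hxy & ->). apply HK, Hxy.
  - exists (g x0 y0), x0, y0. split; auto.
  - destruct (classic (exists x y, S x y /\ m - e < g x y)) as [(x & y & Hxy & Hlt)|Hnone].
    + exists x, y. split; [exact Hxy|]. intros x' y' Hxy'.
      assert (g x' y' <= m) by (apply Hub; exists x', y'; auto). lra.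
    + assert (m <= m - e); [|lra].
      apply Hleast. intros r (x & y & Hxy & ->). apply Rnot_lt_le. intros Hlt.
      apply Hnone. exists x, y. auto.
Qed.

Section GridCover.
Variables (f : R -> R -> R) (x1 x2 y1 y2 K h : R) (M L : nat).
Hypothesis HBV : arzela_var_le f x1 x2 y1 y2 K.
Hypothesis Hx12 : x1 < x2.
Hypothesis Hy12 : y1 < y2.
Hypothesis Hh : 0 < h.
Hypothesis HM : (1 <= M)%nat.
Hypothesis HL : (1 <= L)%nat.
Hypothesis HwM : (x2 - x1) / INR M <= h.
Hypothesis HvL : (y2 - y1) / INR L <= h.

Let X := gridpt x1 x2 M.
Let Y := gridpt y1 y2 L.

Let X_range i i' : (i <= i' <= M)%nat -> x1 <= X i <= X i' /\ X i' <= x2 :=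
  gridpt_range x1 x2 M (Rlt_le _ _ Hx12) HM i i'.
Let Y_range j j' : (j <= j' <= L)%nat -> y1 <= Y j <= Y j' /\ Y j' <= y2 :=
  gridpt_range y1 y2 L (Rlt_le _ _ Hy12) HL j j'.

(* Over one grid cell (possibly flattened to a segment, j' = j) the graph fits in a column
   of cubes whose number is controlled by the oscillation of f at some point q of the cell. *)
Lemma cell_cover i j j' : (i < M)%nat -> (j <= j' <= S j)%nat -> (j' <= L)%nat ->
  exists q : R * R, (X i <= fst q <= X (S i) /\ Y j <= snd q <= Y j') /\
    exists n, covers (graph_rect f (X i) (X (S i)) (Y j) (Y j')) (sqrt 3 * h) n /\
      INR n <= 2 / h * Rabs (f (fst q) (snd q) - f (X i) (Y j)) + 5.
Proof.
  intros Hi Hj Hj'.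
  destruct (X_range i (S i) ltac:(lia)) as [[HXi HXi'] HXS].
  destruct (Y_range j j' ltac:(lia)) as [[HYj HYj'] HYj''].
  set (zc := f (X i) (Y j)).
  destruct (near_sup (fun x y => X i <= x <= X (S i) /\ Y j <= y <= Y j')
              (fun x y => Rabs (f x y - zc)) K h (X i) (Y j)) as (x & y & Hxy & Hmax); auto.
  - split; lra.
  - intros x y [Hx Hy]. apply (var_increment f x1 x2 y1 y2 K HBV); lra.
  - exists (x, y). split; [exact Hxy|]. simpl.
    destruct (column_cover (X i) (X (S i)) (Y j) (Y j') zc (Rabs (f x y - zc) + h) h)
      as [n [Hc Hn]]; auto.
    + pose proof (mesh_nonneg x1 x2 M ltac:(lra) HM).
      unfold X in *. rewrite gridpt_step in *. lra.
    + pose proof (mesh_nonneg y1 y2 L ltac:(lra) HL).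
      pose proof (gridpt_mono y1 y2 L ltac:(lra) HL j' (S j) ltac:(lia)).
      unfold Y in *. rewrite gridpt_step in *. lra.
    + pose proof (Rabs_pos (f x y - zc)). lra.
    + exists n. split.
      * eapply covers_subset; [exact Hc|]. intros [[x' y'] z] (Hx' & Hy' & ->).
        repeat split; try lra. apply Hmax. split; lra.
      * eapply Rle_trans; [exact Hn|]. right. field. lra.
Qed.

(* The t-th diagonal of cells: the k-th cell has rows jj t k .. jj t (k+1); consecutive
   cells are coordinatewise increasing, so the chain bound applies along a diagonal. *)
Let jj (t k : nat) : nat := Nat.min L (k + t - M).

Definition diagonal (t : nat) (p : R * R * R) : Prop :=
  exists k, (k < M)%nat /\ graph_rect f (X k) (X (S k)) (Y (jj t k)) (Y (jj t (S k))) p.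

Lemma diagonal_cover t : exists n, covers (diagonal t) (sqrt 3 * h) n /\
  INR n <= 2 / h * K + INR M * 5.
Proof.
  destruct (finite_choice (0, 0) (fun k q =>
              (X k <= fst q <= X (S k) /\ Y (jj t k) <= snd q <= Y (jj t (S k))) /\
              exists n, covers (graph_rect f (X k) (X (S k)) (Y (jj t k)) (Y (jj t (S k))))
                          (sqrt 3 * h) n /\
                INR n <= 2 / h * Rabs (f (fst q) (snd q) - f (X k) (Y (jj t k))) + 5) M)
    as [Q HQ].
  { intros k Hk. apply cell_cover; unfold jj; lia. }
  set (osc := fun k => Rabs (f (fst (Q k)) (snd (Q k)) - f (X k) (Y (jj t k)))).
  destruct (covers_family
              (fun k => graph_rect f (X k) (X (S k)) (Y (jj t k)) (Y (jj t (S k))))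
              (fun k => 2 / h * osc k + 5) (sqrt 3 * h) M) as [n [Hc Hn]].
  { intros k Hk. apply (proj2 (HQ k Hk)). }
  exists n. split; [exact Hc|]. rewrite rsum_affine in Hn.
  assert (Hchain : rsum osc M <= K).
  { apply (chain_bound f x1 x2 y1 y2 K HBV ltac:(lra) ltac:(lra) M
             X (fun k => Y (jj t k)) (fun k => fst (Q k)) (fun k => snd (Q k))).
    - intros _. split; [apply (X_range 0 0) | apply (Y_range (jj t 0) (jj t 0))];
        unfold jj; lia.
    - intros k Hk. destruct (HQ k Hk) as [[Hx Hy] _].
      destruct (X_range k (S k) ltac:(lia)). destruct (Y_range (jj t k) (jj t (S k)));
        [unfold jj; lia|]. repeat split; lra.
    - intros k Hk. destruct (HQ k ltac:(lia)) as [[Hx Hy] _]. split; lra. }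
  assert (0 <= 2 / h) by (apply Rdiv_le_0_compat; lra).
  apply Rle_trans with (2 / h * rsum osc M + INR M * 5); [exact Hn|].
  apply Rplus_le_compat_r, Rmult_le_compat_l; auto.
Qed.

(* Every cell (i,j) of the grid lies on the diagonal t = j + M - i. *)
Lemma grid_graph_cover : exists n, covers (graph_rect f x1 x2 y1 y2) (sqrt 3 * h) n /\
  INR n <= INR (M + L) * (2 / h * K + INR M * 5).
Proof.
  destruct (covers_family diagonal (fun _ => 2 / h * K + INR M * 5) (sqrt 3 * h) (M + L))
    as [n [Hc Hn]].
  { intros t _. apply diagonal_cover. }
  exists n. split; [|rewrite rsum_const in Hn; exact Hn].
  eapply covers_subset; [exact Hc|]. intros [[x y] z] (Hx & Hy & Hz).
  destruct (gridpt_find x1 x2 M ltac:(lra) HM x Hx) as [i [Hi Hxi]].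
  destruct (gridpt_find y1 y2 L ltac:(lra) HL y Hy) as [j [Hj Hyj]].
  exists (j + M - i)%nat. split; [lia|]. exists i. split; [exact Hi|].
  replace (jj (j + M - i) i) with j by (unfold jj; lia).
  replace (jj (j + M - i) (S i)) with (S j) by (unfold jj; lia).
  repeat split; unfold X, Y; lra.
Qed.

End GridCover.

Lemma BV_graph_cover f x1 x2 y1 y2 K h : arzela_var_le f x1 x2 y1 y2 K ->
  x1 < x2 -> y1 < y2 -> 0 < h ->
  exists n, covers (graph_rect f x1 x2 y1 y2) (sqrt 3 * h) n /\
    INR n <= ((x2 - x1) / h + (y2 - y1) / h + 2) * (2 / h * K + 5 * ((x2 - x1) / h + 1)).
Proof.
  intros HBV Hx Hy Hh.
  destruct (mesh_exists x1 x2 h Hx Hh) as [M [HM [HwM HMb]]].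
  destruct (mesh_exists y1 y2 h Hy Hh) as [L [HL [HvL HLb]]].
  destruct (grid_graph_cover f x1 x2 y1 y2 K h M L) as [n [Hc Hn]]; auto.
  exists n. split; [exact Hc|]. eapply Rle_trans; [exact Hn|].
  pose proof (var_nonneg f x1 x2 y1 y2 K HBV ltac:(lra) ltac:(lra)).
  assert (0 <= 2 / h * K) by (apply Rmult_le_pos; [apply Rdiv_le_0_compat|]; lra).
  pose proof (pos_INR M). pose proof (pos_INR L).
  rewrite plus_INR. apply Rmult_le_compat; lra.
Qed.

(** * Upper bound: N_delta(G(T)) = O(delta^-2 log(1/delta)) *)

Lemma monotone_find (u : nat -> R) N x : (forall k, u k <= u (S k)) -> u 0%nat <= x < u N ->
  exists k, (k < N)%nat /\ u k <= x <= u (S k).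
Proof.
  intros Hu. induction N as [|N IH]; intros Hx; [lra|].
  destruct (Rlt_dec x (u N)) as [Hlt|Hge].
  - destruct (IH ltac:(lra)) as [k [Hk Hk']]. exists k. split; [lia | exact Hk'].
  - exists N. split; [lia | lra].
Qed.

Lemma inv_ge_1 h : 0 < h <= 1 -> 1 <= / h.
Proof. intros Hh. rewrite <- Rinv_1. apply Rinv_le_contravar; lra. Qed.

Lemma halving_count r h : 0 < r -> 0 < h <= 1 ->
  exists N : nat, r <= 2 ^ N * h /\ INR N <= 2 * (ln (2 * (r + 1)) + ln (/ h)).
Proof.
  intros Hr Hh.
  destruct (mesh_exists 0 r h Hr ltac:(lra)) as [M [HM [Hmesh HMb]]].
  rewrite Rminus_0_r in Hmesh, HMb.
  assert (HMpos : 0 < INR M) by (apply lt_0_INR; lia).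
  set (N := Nat.log2_up M).
  assert (HpowN : INR M <= 2 ^ N <= 2 * INR M).
  { replace (2 ^ N) with (INR (2 ^ N)) by (rewrite pow_INR; reflexivity).
    replace (2 * INR M) with (INR (2 * M)) by (rewrite mult_INR; simpl; lra).
    split; apply le_INR.
    - apply Nat.log2_log2_up_spec. lia.
    - destruct (Nat.eq_dec M 1) as [->|HM1]; [simpl; lia|].
      destruct (Nat.log2_up_spec M ltac:(lia)) as [H1 _].
      unfold N. destruct (Nat.log2_up M) as [|n]; simpl in *; lia. }
  exists N. split.
  - apply Rmult_le_compat_r with (r := INR M) in Hmesh; [|lra].
    unfold Rdiv in Hmesh. rewrite Rmult_assoc, Rinv_l, Rmult_1_r in Hmesh by lra.
    assert (INR M * h <= 2 ^ N * h) by (apply Rmult_le_compat_r; lra). lra.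
  - pose proof (inv_ge_1 h Hh) as Hu.
    assert (Hrh : r / h <= r * / h) by (unfold Rdiv; lra).
    assert (H2N : 2 ^ N <= 2 * (r + 1) * / h) by nra.
    assert (HlnN : INR N * ln 2 <= ln (2 * (r + 1)) + ln (/ h)).
    { rewrite <- ln_pow, <- ln_mult by (lra || apply Rinv_0_lt_compat; lra).
      apply ln_le; [apply pow_lt; lra | exact H2N]. }
    pose proof ln_lt_2. pose proof (pos_INR N). nra.
Qed.

Section UpperBound.
Variables (a b c d K : R) (phi : R -> R -> R).
Hypothesis Hab : a < b.
Hypothesis Hcd : c < d.
Hypothesis Hper : forall y, c <= y <= d -> phi (an a b 0) y = phi (an a b 1) y.
Hypothesis HBV : arzela_var_le phi (an a b 0) (an a b 1) c d K.

Let Ha01 : an a b 0 <= an a b 1.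
Proof. apply an_mono; auto. Qed.

(* bound for |phi|, hence for |T| *)
Let B := Rabs (phi (an a b 0) c) + K.
(* constants in the cube counts of one strip and of the tail *)
Let S0 := (b - a + (d - c) + 2) * (2 * K + 5 * (b - a + 1)).
Let T0 := (d - c + 1) * (2 * B + 3).

Let HK : 0 <= K := var_nonneg phi _ _ _ _ K HBV Ha01 (Rlt_le _ _ Hcd).

Lemma graphT_split N p : graphT a b c d phi p ->
  (exists k, (k < N)%nat /\ graph_rect (Fk a b phi (S k)) (an a b k) (an a b (S k)) c d p) \/
  box3 (an a b N) b c d 0 B p.
Proof.
  destruct p as [[x y] z]. intros (Hx & Hy & ->).
  destruct (Rlt_dec x (an a b N)) as [Hlt|Hge].
  - left. destruct (monotone_find (an a b) N x) as [k [Hk Hxk]].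
    + intros k. apply an_mono; auto.
    + simpl. lra.
    + exists k. split; [exact Hk|]. repeat split; try lra. apply (T_val a b c d phi Hab Hper); auto.
  - right. repeat split; try lra. rewrite Rminus_0_r.
    apply (T_bound a b c d phi Hab Hper); try lra.
    intros x' y' Hx' Hy'. unfold B. apply (var_bound phi _ _ _ _ K HBV); auto; lra.
Qed.

Lemma strip_cover k h : 0 < h <= 1 ->
  exists n, covers (graph_rect (Fk a b phi (S k)) (an a b k) (an a b (S k)) c d) (sqrt 3 * h) n /\
    INR n <= S0 * (/ h) ^ 2.
Proof.
  intros Hh. set (w := an a b (S k) - an a b k).
  assert (Hw : 0 < w <= b - a).
  { unfold w. rewrite an_step. pose proof (pow_lt 2 (S k) ltac:(lra)).
    split; [apply Rdiv_lt_0_compat; lra|].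
    assert (1 <= 2 ^ S k) by (apply pow_R1_Rle; lra).
    unfold Rdiv. apply Rle_trans with ((b - a) * 1); [|lra].
    apply Rmult_le_compat_l; [lra|]. rewrite <- Rinv_1. apply Rinv_le_contravar; lra. }
  destruct (BV_graph_cover (Fk a b phi (S k)) (an a b k) (an a b (S k)) c d K h) as [n [Hc Hn]];
    [apply var_Fk; auto; lra | unfold w in Hw; lra | exact Hcd | lra |].
  exists n. split; [exact Hc|]. eapply Rle_trans; [exact Hn|]. fold w.
  pose proof (inv_ge_1 h Hh) as Hu. set (u := / h) in *.
  replace (w / h) with (w * u) by reflexivity.
  replace ((d - c) / h) with ((d - c) * u) by reflexivity.
  replace (2 / h * K) with (2 * K * u) by (unfold u; field; lra).
  replace (S0 * u ^ 2) with (((b - a + (d - c) + 2) * u) * ((2 * K + 5 * (b - a + 1)) * u))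
    by (unfold S0; ring).
  apply Rmult_le_compat; nra.
Qed.

Lemma tail_cover N h : 0 < h <= 1 -> b - a <= 2 ^ N * h ->
  exists n, covers (box3 (an a b N) b c d 0 B) (sqrt 3 * h) n /\ INR n <= T0 * (/ h) ^ 2.
Proof.
  intros Hh HN.
  assert (HB : 0 <= B) by (unfold B; pose proof (Rabs_pos (phi (an a b 0) c)); lra).
  destruct (box_cover (an a b N) b c d 0 B h) as [n [Hc Hn]]; auto; [lra| |].
  { rewrite an_closed. pose proof (pow_lt 2 N ltac:(lra)).
    assert (0 <= (b - a) / 2 ^ N <= h); [|lra].
    split; [apply Rdiv_le_0_compat; lra|].
    apply Rmult_le_reg_r with (2 ^ N); [lra|]. unfold Rdiv.
    rewrite Rmult_assoc, Rinv_l, Rmult_1_r by lra. lra. }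
  exists n. split; [exact Hc|]. eapply Rle_trans; [exact Hn|].
  pose proof (inv_ge_1 h Hh) as Hu. set (u := / h) in *.
  replace ((d - c) / h) with ((d - c) * u) by reflexivity.
  replace (2 * B / h) with (2 * B * u) by (unfold u; field; lra).
  replace (T0 * u ^ 2) with (((d - c + 1) * u) * ((2 * B + 3) * u)) by (unfold T0; ring).
  apply Rmult_le_compat; nra.
Qed.

(* With N ~ log2((b-a)/h) strips: N * S0/h^2 + T0/h^2 cubes of side h suffice. *)
Lemma graphT_cover h : 0 < h <= 1 -> exists n,
  covers (graphT a b c d phi) (sqrt 3 * h) n /\
  INR n <= (2 + 2 * ln (2 * (b - a + 1))) * (S0 + T0) * (1 + ln (/ h)) * (/ h) ^ 2.
Proof.
  intros Hh.
  destruct (halving_count (b - a) h ltac:(lra) Hh) as [N [HNw HNlog]].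
  destruct (covers_family (fun k => graph_rect (Fk a b phi (S k)) (an a b k) (an a b (S k)) c d)
              (fun _ => S0 * (/ h) ^ 2) (sqrt 3 * h) N) as [n1 [Hc1 Hn1]].
  { intros k _. apply strip_cover, Hh. }
  destruct (tail_cover N h Hh HNw) as [n2 [Hc2 Hn2]].
  exists (n1 + n2)%nat. split.
  - eapply covers_subset; [apply (covers_union _ _ _ _ _ Hc1 Hc2)|]. apply graphT_split.
  - rewrite plus_INR. rewrite rsum_const in Hn1.
    pose proof (inv_ge_1 h Hh) as Hu. set (u := / h) in *.
    assert (Hlnu : 0 <= ln u) by (rewrite <- ln_1; apply ln_le; lra).
    assert (HA : 0 <= ln (2 * (b - a + 1))) by (rewrite <- ln_1; apply ln_le; lra).
    assert (HS0 : 0 <= S0) by (unfold S0; apply Rmult_le_pos; lra).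
    assert (HT0 : 0 <= T0) by (unfold T0, B; pose proof (Rabs_pos (phi (an a b 0) c));
                               apply Rmult_le_pos; lra).
    assert (Hu2 : 0 <= u ^ 2) by (apply pow_le; lra).
    assert (HN1 : INR N + 1 <= (2 + 2 * ln (2 * (b - a + 1))) * (1 + ln u)) by nra.
    apply Rle_trans with ((INR N + 1) * ((S0 + T0) * u ^ 2)).
    { assert (0 <= INR N * (T0 * u ^ 2)) by (apply Rmult_le_pos; [apply pos_INR | nra]).
      assert (0 <= S0 * u ^ 2) by (apply Rmult_le_pos; lra). nra. }
    replace (_ * (1 + ln u) * u ^ 2)
      with ((2 + 2 * ln (2 * (b - a + 1))) * (1 + ln u) * ((S0 + T0) * u ^ 2)) by ring.
    apply Rmult_le_compat_r; [apply Rmult_le_pos|]; lra.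
Qed.

(* The same bound at scale delta = sqrt 3 * h, in the form used by the box-dimension criterion. *)
Lemma graphT_cover_delta : exists C, 0 < C /\ forall del, 0 < del <= 1 ->
  exists n, covers (graphT a b c d phi) del n /\ INR n <= C * (1 - ln del) * (/ del) ^ 2.
Proof.
  set (A := ln (2 * (b - a + 1))). set (Cup := (2 + 2 * A) * (S0 + T0)).
  assert (HA : 0 <= A) by (unfold A; rewrite <- ln_1; apply ln_le; lra).
  assert (HCup : 0 < Cup).
  { unfold Cup, S0, T0, B. pose proof (Rabs_pos (phi (an a b 0) c)).
    apply Rmult_lt_0_compat; [lra|].
    apply Rplus_lt_le_0_compat; apply Rmult_lt_0_compat || apply Rmult_le_pos; lra. }
  exists (6 * Cup). split; [lra|]. intros del Hdel.
  set (s3 := sqrt 3).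
  assert (Hs3 : s3 * s3 = 3) by (unfold s3; rewrite sqrt_sqrt; lra).
  assert (Hs3p : 0 < s3) by (unfold s3; apply sqrt_lt_R0; lra).
  assert (Hs3b : 1 <= s3 < 2) by nra.
  (* ln (sqrt 3) < 1, since sqrt 3 < 2 < e *)
  assert (Hln3 : ln s3 < 1).
  { rewrite <- (ln_exp 1). apply ln_increasing; [lra|]. pose proof (exp_ineq1 1 ltac:(lra)). lra. }
  destruct (graphT_cover (del / s3)) as [n [Hc Hn]].
  { split; [apply Rdiv_lt_0_compat; lra|]. apply Rmult_le_reg_r with s3; [lra|].
    unfold Rdiv. rewrite Rmult_assoc, Rinv_l, Rmult_1_r by lra. lra. }
  exists n. split.
  - eapply covers_diam; [exact Hc|]. right. fold s3. field. lra.
  - fold A S0 T0 Cup in Hn. eapply Rle_trans; [exact Hn|].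
    replace (/ (del / s3)) with (s3 * / del) by (field; lra).
    rewrite ln_mult, ln_Rinv by (lra || apply Rinv_0_lt_compat; lra).
    assert (Hlnd : ln del <= 0) by (rewrite <- ln_1; apply ln_le; lra).
    assert (Hd2 : 0 <= (/ del) ^ 2) by (apply pow_le, Rlt_le, Rinv_0_lt_compat; lra).
    replace ((s3 * / del) ^ 2) with (3 * (/ del) ^ 2) by (rewrite <- Hs3; ring).
    replace (6 * Cup * (1 - ln del) * (/ del) ^ 2)
      with (Cup * (2 * (1 - ln del)) * (3 * (/ del) ^ 2)) by ring.
    apply Rmult_le_compat_r; [lra|]. apply Rmult_le_compat_l; lra.
Qed.

End UpperBound.

(** * Lower bound: N_delta >= c0 delta^-2 for any set projecting onto a rectangle *)

Lemma nat_sep i i' s : 0 < s -> i <> i' -> s <= Rabs (INR i * s - INR i' * s).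
Proof.
  intros Hs Hii. rewrite <- Rmult_minus_distr_r, Rabs_mult, (Rabs_right s) by lra.
  rewrite <- (Rmult_1_l s) at 1. apply Rmult_le_compat_r; [lra|].
  destruct (Nat.lt_total i i') as [H|[H|H]]; [|lia|];
    apply (proj2 (Nat.le_succ_l _ _)), le_INR in H; rewrite S_INR in H;
    [rewrite Rabs_minus_sym|]; rewrite Rabs_right; lra.
Qed.

(* Points of the grid of mesh 2 delta over [a,b] x [c,d] are at mutual distance > delta, so
   each set of a delta-cover contains at most one of the ~ (b-a)(d-c)/(4 delta^2) lifted points. *)
Lemma cover_lower (F : R * R * R -> Prop) a b c d del n : a < b -> c < d -> 0 < del ->
  (forall x y, a <= x <= b -> c <= y <= d -> exists z, F (x, y, z)) ->
  covers F del n -> (b - a) * (d - c) / 4 * (/ del) ^ 2 <= INR n.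
Proof.
  intros Hab Hcd Hdel Hproj [U [HUdiam HUcov]].
  set (s := 2 * del). assert (Hs : 0 < s) by (unfold s; lra).
  destruct (ceil_exists ((b - a) / s)) as [I [HI1 HI2]]; [apply Rdiv_le_0_compat; lra|].
  destruct (ceil_exists ((d - c) / s)) as [J [HJ1 HJ2]]; [apply Rdiv_le_0_compat; lra|].
  assert (HJ : J <> 0%nat).
  { intros ->. simpl in HJ1. assert (0 < (d - c) / s) by (apply Rdiv_lt_0_compat; lra). lra. }
  set (xq := fun q => a + INR (q / J) * s). set (yq := fun q => c + INR (q mod J) * s).
  (* each grid point lifts to a point of F, lying in some member of the cover *)
  destruct (finite_choice (0, 0%nat)
              (fun q zk => (snd zk < n)%nat /\ U (snd zk) (xq q, yq q, fst zk)) (I * J))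
    as [Z HZ].
  { intros q Hq.
    assert (Hi : (q / J < I)%nat) by (apply Nat.Div0.div_lt_upper_bound; lia).
    assert (Hj : (q mod J < J)%nat) by (apply Nat.mod_upper_bound; exact HJ).
    apply (proj2 (Nat.le_succ_l _ _)), le_INR in Hi, Hj. rewrite S_INR in Hi, Hj.
    pose proof (pos_INR (q / J)). pose proof (pos_INR (q mod J)).
    assert (Hsi : INR (q / J) * s <= b - a).
    { apply Rle_trans with ((INR I - 1) * s); [apply Rmult_le_compat_r; lra|].
      apply Rmult_le_compat_r with (r := s) in HI2; [|lra].
      unfold Rdiv in HI2. rewrite Rmult_plus_distr_r, Rmult_assoc, Rinv_l in HI2 by lra. lra. }
    assert (Hsj : INR (q mod J) * s <= d - c).
    { apply Rle_trans with ((INR J - 1) * s); [apply Rmult_le_compat_r; lra|].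
      apply Rmult_le_compat_r with (r := s) in HJ2; [|lra].
      unfold Rdiv in HJ2. rewrite Rmult_plus_distr_r, Rmult_assoc, Rinv_l in HJ2 by lra. lra. }
    destruct (Hproj (xq q) (yq q)) as [z Hz]; [unfold xq; nra | unfold yq; nra |].
    destruct (HUcov _ Hz) as [k [Hk HUk]]. exists (z, k). split; assumption. }
  assert (HIJ : (I * J <= n)%nat).
  { apply (pigeonhole _ _ (fun q => snd (Z q))); [intros q Hq; apply HZ, Hq|].
    intros q q' Hq Hq' Heq. destruct (HZ q Hq) as [Hk Hin]. destruct (HZ q' Hq') as [_ Hin'].
    rewrite Heq in Hk, Hin. pose proof (HUdiam _ Hk _ _ Hin Hin') as Hd.
    pose proof (dist3_ge_x (xq q) (yq q) (fst (Z q)) (xq q') (yq q') (fst (Z q'))).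
    pose proof (dist3_ge_y (xq q) (yq q) (fst (Z q)) (xq q') (yq q') (fst (Z q'))).
    destruct (Nat.eq_dec (q / J) (q' / J)) as [E1|E1];
      [destruct (Nat.eq_dec (q mod J) (q' mod J)) as [E2|E2]|].
    - rewrite (Nat.div_mod_eq q J), (Nat.div_mod_eq q' J), E1, E2. reflexivity.
    - pose proof (nat_sep _ _ s Hs E2). unfold yq in *.
      replace (c + INR (q mod J) * s - (c + INR (q' mod J) * s))
        with (INR (q mod J) * s - INR (q' mod J) * s) in * by ring.
      unfold s in *. lra.
    - pose proof (nat_sep _ _ s Hs E1). unfold xq in *.
      replace (a + INR (q / J) * s - (a + INR (q' / J) * s))
        with (INR (q / J) * s - INR (q' / J) * s) in * by ring.
      unfold s in *. lra. }
  apply le_INR in HIJ. rewrite mult_INR in HIJ. eapply Rle_trans; [|exact HIJ].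
  replace ((b - a) * (d - c) / 4 * (/ del) ^ 2) with ((b - a) / s * ((d - c) / s))
    by (unfold s; field; lra).
  apply Rmult_le_compat; auto; apply Rdiv_le_0_compat; lra.
Qed.

(** * A criterion for box dimension 2 *)

Lemma ln_sublinear e : 0 < e -> forall L, 1 + 8 / (e * e) <= L -> ln (1 + L) <= e * L.
Proof.
  intros He L HL.
  assert (He2 : 8 / (e * e) * (e * e) = 8) by (field; lra).
  assert (H8 : 0 <= 8 / (e * e)) by (apply Rdiv_le_0_compat; nra).
  assert (HL8 : 8 <= e * e * L) by nra.
  set (r := sqrt (1 + L)). assert (Hr : 0 < r) by (apply sqrt_lt_R0; lra).
  assert (Hr2 : r * r = 1 + L) by (unfold r; rewrite sqrt_sqrt; lra).
  (* ln (1 + L) = 2 ln r < 2 r <= e L *)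
  assert (Hlnr : ln r < r).
  { rewrite <- (ln_exp r) at 2. apply ln_increasing; [lra|].
    pose proof (exp_ineq1 r ltac:(lra)). lra. }
  assert (H2r : 2 * r <= e * L).
  { assert (0 <= e * L) by nra. apply Rsqr_incr_0_var; [unfold Rsqr; nra | lra]. }
  rewrite <- Hr2, ln_mult by lra. lra.
Qed.

Lemma log_ratio_limit c0 C eps : 0 < c0 -> 0 < C -> 0 < eps ->
  exists L0, 0 < L0 /\ forall L N, L0 < L -> c0 * exp (2 * L) <= N ->
    N <= C * (1 + L) * exp (2 * L) -> Rabs (ln N / L - 2) < eps.
Proof.
  intros Hc0 HC He.
  set (L0 := 1 + 8 / ((eps / 2) * (eps / 2)) + Rabs (ln c0) / eps + 2 * Rabs (ln C) / eps).
  assert (0 <= 8 / ((eps / 2) * (eps / 2))) by (apply Rdiv_le_0_compat; nra).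
  assert (0 <= Rabs (ln c0) / eps) by (apply Rdiv_le_0_compat; [apply Rabs_pos | lra]).
  assert (0 <= 2 * Rabs (ln C) / eps)
    by (apply Rdiv_le_0_compat; [pose proof (Rabs_pos (ln C)) | ]; lra).
  exists L0. split; [unfold L0; lra|]. intros L N HL Hlo Hhi.
  assert (HLpos : 0 < L) by (unfold L0 in HL; lra).
  assert (HNpos : 0 < N) by (pose proof (exp_pos (2 * L)); nra).
  assert (Hlnlo : ln c0 + 2 * L <= ln N).
  { rewrite <- (ln_exp (2 * L)), <- ln_mult by (apply exp_pos || lra). apply ln_le; auto.
    apply Rmult_lt_0_compat; [lra | apply exp_pos]. }
  assert (Hlnhi : ln N <= ln C + ln (1 + L) + 2 * L).
  { rewrite <- (ln_exp (2 * L)), <- !ln_mult by (apply exp_pos || nra). apply ln_le; auto. }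
  assert (Hsub : ln (1 + L) <= eps / 2 * L) by (apply ln_sublinear; unfold L0 in HL; lra).
  assert (Hc0L : Rabs (ln c0) < eps * L).
  { apply Rmult_lt_reg_r with (/ eps); [apply Rinv_0_lt_compat; lra|].
    replace (eps * L * / eps) with L by (field; lra). unfold L0, Rdiv in *; lra. }
  assert (HCL : Rabs (ln C) < eps / 2 * L).
  { apply Rmult_lt_reg_r with (2 / eps); [apply Rdiv_lt_0_compat; lra|].
    replace (eps / 2 * L * (2 / eps)) with L by (field; lra).
    replace (Rabs (ln C) * (2 / eps)) with (2 * Rabs (ln C) / eps) by (field; lra).
    unfold L0 in HL; lra. }
  pose proof (Rle_abs (ln C)).
  pose proof (proj1 (Rabs_le_between (ln c0) (Rabs (ln c0))) (Rle_refl _)).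
  replace (ln N / L - 2) with ((ln N - 2 * L) / L) by (field; lra).
  unfold Rdiv.
  rewrite Rabs_mult, (Rabs_right (/ L)) by (apply Rle_ge, Rlt_le, Rinv_0_lt_compat; lra).
  apply Rmult_lt_reg_r with L; [lra|]. rewrite Rmult_assoc, Rinv_l, Rmult_1_r by lra.
  apply Rabs_def1; lra.
Qed.

Lemma inv_sq_exp del : 0 < del -> (/ del) ^ 2 = exp (2 * - ln del).
Proof.
  intros Hdel. replace (2 * - ln del) with (- ln del + - ln del) by ring.
  rewrite exp_plus, exp_Ropp, exp_ln by exact Hdel. ring.
Qed.

Lemma box_dim_two (F : R * R * R -> Prop) c0 C : 0 < c0 -> 0 < C ->
  (forall del n, 0 < del -> covers F del n -> c0 * (/ del) ^ 2 <= INR n) ->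
  (forall del, 0 < del <= 1 ->
     exists n, covers F del n /\ INR n <= C * (1 - ln del) * (/ del) ^ 2) ->
  box_dim_eq F 2.
Proof.
  intros Hc0 HC Hlower Hupper. split.
  - intros del Hdel. destruct (Rle_dec del 1) as [Hle|Hgt].
    + destruct (Hupper del ltac:(lra)) as [n [Hn _]]. exists n. exact Hn.
    + destruct (Hupper 1 ltac:(lra)) as [n [Hn _]]. exists n. eapply covers_diam; [exact Hn | lra].
  - intros eps Heps. destruct (log_ratio_limit c0 C eps Hc0 HC Heps) as [L0 [HL0 Hlim]].
    exists (Rmin 1 (exp (- L0))). split; [apply Rmin_glb_lt; [lra | apply exp_pos]|].
    intros del N [Hdel Hdel0] [HN HNmin].
    assert (Hd1 : del < 1) by (eapply Rlt_le_trans; [exact Hdel0 | apply Rmin_l]).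
    assert (HL : L0 < - ln del).
    { assert (del < exp (- L0)) by (eapply Rlt_le_trans; [exact Hdel0 | apply Rmin_r]).
      apply ln_increasing in H; [|exact Hdel]. rewrite ln_exp in H. lra. }
    destruct (Hupper del ltac:(lra)) as [n [Hn Hnb]].
    pose proof (le_INR _ _ (HNmin n Hn)) as HNn.
    pose proof (Hlower del N Hdel HN) as HNlo.
    rewrite inv_sq_exp in HNlo, Hnb by exact Hdel.
    apply Hlim; [exact HL | exact HNlo | lra].
Qed.

Theorem mainTheorem10 (a b c d : R) (phi : R -> R -> R) :
  a < b -> c < d ->
  continuous_on_rect phi (an a b 0) (an a b 1) c d ->
  (forall y, c <= y <= d -> phi (an a b 0) y = phi (an a b 1) y) ->
  arzela_BV phi (an a b 0) (an a b 1) c d ->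
  box_dim_eq (graphT a b c d phi) 2.
Proof.
  intros Hab Hcd _ Hper [K HBV].
  destruct (graphT_cover_delta a b c d K phi Hab Hcd Hper HBV) as [C [HC Hupper]].
  apply (box_dim_two _ ((b - a) * (d - c) / 4) C); [| exact HC | | exact Hupper].
  - apply Rdiv_lt_0_compat; [apply Rmult_lt_0_compat|]; lra.
  - (* the graph projects onto the whole rectangle *)
    intros del n Hdel Hcov.
    apply (cover_lower (graphT a b c d phi) a b c d del n Hab Hcd Hdel); [|exact Hcov].
    intros x y Hx Hy. exists (Tlim a b phi x y). repeat split; lra.
Qed.
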